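(* Let $F$ be a rooted directed forest on $n \geq 1$ vertices and let $k \geq 2$ be a natural number. Then $\psi_b(F,k) \geq \frac{n+k}{2k}$. Moreover, this lower bound is tight (it is attained whenever the expression $\frac{n+k}{2k}$ is an integer).
   Context: A rooted directed forest is a disjoint union of rooted trees, each with all edges oriented away from its root. In a rooted directed forest, a leaf is a vertex of out-degree $0$ (this includes isolated vertices), and a branching vertex is a vertex of out-degree at least $2$. A set $P$ of vertices of $F$ is a branching $k$-path vertex cover of $F$ if every leaf of $F$ belongs to $P$ and every directed path on $k$ vertices (of length $k-1$) in $F$ contains a branching vertex or a vertex of $P$. The branching $k$-path vertex cover number $\psi_b(F,k)$ is the minimum size of a branching $k$-path vertex cover of $F$. *)

From mathcomp Require Import all_boot all_order all_algebra.
Set Implicit Arguments. Unset Strict Implicit. Unset Printing Implicit Defensive.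

Section Forest.
Variables (T : finType) (e : rel T).

(* Each component is then a rooted tree with
   all arcs oriented away from its root (the unique vertex of in-degree 0). *)
Definition is_rooted_forest : bool :=
  [forall v, #|[set u | e u v]| <= 1] &&
  [forall u, forall v, e u v ==> ~~ connect e v u].

Definition outdeg (v : T) : nat := #|[set u | e v u]|.
Definition is_leaf (v : T) : bool := outdeg v == 0.
Definition is_branching (v : T) : bool := 1 < outdeg v.

Definition dpath (s : seq T) : bool :=
  if s is x :: s' then path e x s' else false.

Definition is_bkpvc (k : nat) (P : {set T}) : bool :=
  [forall v, is_leaf v ==> (v \in P)] &&
  [forall t : k.-tuple T,
     dpath t ==> has (fun v => is_branching v || (v \in P)) t].

(* psi_b(F,k): minimum size of a branching k-path vertex cover
   (the whole vertex set is always one for k >= 1, so #|T| is a safe default). *)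
Definition psi_b (k : nat) : nat :=
  \big[minn/#|T|]_(P : {set T} | is_bkpvc k P) #|P|.

End Forest.

From mathcomp Require Import all_boot all_order all_algebra zify.
Import Order.TTheory GRing.Theory Num.Theory.
Set Implicit Arguments. Unset Strict Implicit.

(* In a rooted forest there are fewer branching vertices than leaves, and all
   leaves lie in P, so the set Q of branching vertices and vertices of P has
   fewer than 2|P| elements.  Walking down from any vertex along children one meets Q within
   k - 1 steps, for otherwise the walk is an uncovered directed path on k
   vertices; as parents are unique, every vertex is thus at height < k above
   some element of Q, whence n <= k |Q| <= k (2|P| - 1).  Equality holds for a
   complete binary tree with p leaves in which every node is replaced by a
   directed path on k vertices: its p leaves form a cover. *)

Definition indeg (T : finType) (e : rel T) (v : T) : nat := #|[set u | e u v]|.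

Lemma card_set_sum (T : finType) (P : pred T) : #|[set x | P x]| = \sum_x (P x : nat).
Proof.
rewrite -sum1_card big_mkcond; apply: eq_bigr => x _.
by rewrite inE; case: (P x).
Qed.

Lemma sum_outdeg_indeg (T : finType) (e : rel T) :
  \sum_v outdeg e v = \sum_v indeg e v.
Proof.
rewrite /outdeg /indeg; under eq_bigr do rewrite card_set_sum.
under [RHS]eq_bigr do rewrite card_set_sum.
exact: exchange_big.
Qed.

Lemma psi_b_le_card (T : finType) (e : rel T) k (P : {set T}) :
  is_bkpvc e k P -> psi_b e k <= #|P|.
Proof.
move=> coverP; have := bigmin_le_cond #|T| (fun P : {set T} => #|P|) coverP.
by rewrite minEnat.
Qed.

Lemma rooted_forest_of_rank (T : finType) (e : rel T) (r : T -> nat) :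
  (forall v, indeg e v <= 1) -> (forall u v, e u v -> r u < r v) -> is_rooted_forest e.
Proof.
move=> indeg_le1 r_lt; apply/andP; split; first exact/forallP.
apply/forallP => u; apply/forallP => v; apply/implyP => euv.
apply/negP => /connectP [s s_path u_last].
have : r v <= r (last v s).
  elim: s v s_path {u_last euv} => [//|w s IH] v /= /andP [evw /IH].
  exact/leq_trans/ltnW/r_lt.
by rewrite -u_last leqNgt r_lt.
Qed.

Lemma card_ord_geq N a : a <= N -> #|[set i : 'I_N | a <= i]| = N - a.
Proof.
move=> le_aN; rewrite card_set_sum -(big_mkord xpredT (fun i => (a <= i : nat))).
rewrite (big_cat_nat (leq0n a) le_aN) /= big_nat_cond.
rewrite big1 => [|i /andP [/andP [_ lt_ia] _]].
  rewrite add0n big_nat_cond (eq_bigr (fun _ => 1)) => [|i /andP [/andP [le_ai _] _]].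
    by rewrite -big_nat_cond sum_nat_const_nat muln1.
  by rewrite le_ai.
by rewrite leqNgt lt_ia.
Qed.

Section RootedForest.
Variables (T : finType) (e : rel T).
Hypothesis forest : is_rooted_forest e.

Lemma forest_indeg_le1 v : indeg e v <= 1.
Proof. by case/andP: forest => /forallP /(_ v). Qed.

Lemma forest_arc_not_connect u v : e u v -> ~~ connect e v u.
Proof. by case/andP: forest => _ /forallP /(_ u) /forallP /(_ v) /implyP. Qed.

Lemma forest_has_root : 0 < #|T| -> exists r, indeg e r = 0.
Proof.
move=> /card_gt0P [x _].
pose ancestors v := #|[set u | connect e u v]|.
have [r _ r_min] := @arg_minnP T x predT ancestors isT.
exists r; apply: eq_card0 => u; rewrite inE; apply/negP => eur.
have := r_min u isT; rewrite leqNgt => /negP; apply.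
apply: proper_card; apply/properP; split.
  by apply/subsetP => w; rewrite !inE => ewu; apply: connect_trans ewu (connect1 eur).
by exists r; rewrite !inE ?connect0 ?forest_arc_not_connect.
Qed.

Lemma sum_indeg_lt : 0 < #|T| -> \sum_v indeg e v < #|T|.
Proof.
move=> /forest_has_root [r r_root].
rewrite (bigD1 r) //= r_root add0n -sum1_card [X in _ < X](bigD1 r) //= add1n ltnS.
by apply: leq_sum => v _; apply: forest_indeg_le1.
Qed.

Lemma branching_lt_leaves :
  0 < #|T| -> #|[set v | is_branching e v]| < #|[set v | is_leaf e v]|.
Proof.
move=> T_gt0.
have deg_ge : \sum_v ((~~ is_leaf e v : nat) + is_branching e v) <= \sum_v outdeg e v.
  by apply: leq_sum => v _; rewrite /is_leaf /is_branching; case: (outdeg e v) => [|[|]].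
have leaf_split : \sum_v ((is_leaf e v : nat) + ~~ is_leaf e v) = #|T|.
  by under eq_bigr do rewrite addnC addn_negb; rewrite sum1_card.
rewrite !big_split /= -!card_set_sum in deg_ge leaf_split.
have := sum_indeg_lt T_gt0; rewrite -sum_outdeg_indeg -leaf_split; lia.
Qed.

Definition child v := odflt v [pick u | e v u].
Definition parent v := odflt v [pick u | e u v].

Lemma child_arc v : ~~ is_leaf e v -> e v (child v).
Proof.
rewrite /child /is_leaf /outdeg; case: pickP => [//|no_child] /negP []; apply/eqP.
by apply: eq_card0 => u; rewrite inE no_child.
Qed.

Lemma parent_arc u v : e u v -> parent v = u.
Proof.
move=> euv; rewrite /parent; case: pickP => [w ewv|no_parent] /=.
  by apply: (card_le1_eqP (forest_indeg_le1 v)); rewrite inE.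
by rewrite no_parent in euv.
Qed.

Lemma path_traject_child v d :
  {in traject child v d, forall x, ~~ is_leaf e x} -> path e v (traject child (child v) d).
Proof.
elim: d v => [//|d IH] v inner /=.
rewrite child_arc ?IH // => [x x_in|]; apply: inner; rewrite ?mem_head //.
by rewrite trajectS inE x_in orbT.
Qed.

Lemma iter_parent_child v d :
  {in traject child v d, forall x, ~~ is_leaf e x} -> iter d parent (iter d child v) = v.
Proof.
elim: d v => [//|d IH] v inner.
have v_inner : ~~ is_leaf e v by apply: inner; rewrite mem_head.
rewrite iterS iterSr IH ?(parent_arc (child_arc v_inner)) // => x x_in.
by apply: inner; rewrite trajectS inE x_in orbT.
Qed.

Variables (k : nat) (P : {set T}).
Hypotheses (k_gt0 : 0 < k) (coverP : is_bkpvc e k P).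

Let B := [set v | is_branching e v].

Lemma leaf_in_cover v : is_leaf e v -> v \in P.
Proof. by case/andP: coverP => /forallP /(_ v) /implyP. Qed.

Lemma reach_cover_or_branching v :
  exists2 d, d < k &
    (iter d child v \in P :|: B) /\ {in traject child v d, forall x, ~~ is_leaf e x}.
Proof.
have inner_not_leaf x : x \notin P :|: B -> ~~ is_leaf e x.
  by rewrite !inE negb_or => /andP [xP _]; apply: contra xP; apply: leaf_in_cover.
case: (boolP [exists d : 'I_k, iter d child v \in P :|: B]) => [/existsP [d0 d0Q]|noQ].
  have exQ : exists d, iter d child v \in P :|: B by exists d0.
  case: (ex_minnP exQ) => d dQ d_min.
  exists d; first exact: leq_ltn_trans (d_min _ d0Q) (ltn_ord d0).
  split=> // x /trajectP [i lt_id ->]; apply: inner_not_leaf.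
  by apply: contraTN lt_id => /d_min; rewrite leqNgt.
have walk_notQ x : x \in traject child v k -> x \notin P :|: B.
  move=> /trajectP [i lt_ik ->].
  by move: noQ; rewrite negb_exists => /forallP /(_ (Ordinal lt_ik)).
have size_walk : size (traject child v k) == k by rewrite size_traject.
case/andP: coverP => _ /forallP /(_ (Tuple size_walk)) /implyP /=.
case: k k_gt0 walk_notQ => // k' _ walk_notQ.
rewrite /dpath trajectS path_traject_child => [/(_ isT) /hasP [x /walk_notQ]|x x_in].
  by rewrite !inE negb_or => /andP [/negbTE -> /negbTE ->].
by apply/inner_not_leaf/walk_notQ; rewrite trajectSr mem_rcons inE x_in orbT.
Qed.

Lemma card_le_mul_cover_branching : #|T| <= k * #|P :|: B|.
Proof.
pose up (qd : T * 'I_k) := iter qd.2 parent qd.1.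
have covered : [set: T] \subset up @: setX (P :|: B) [set: 'I_k].
  apply/subsetP => v _; have [d lt_dk [dQ inner]] := reach_cover_or_branching v.
  apply/imsetP; exists (iter d child v, Ordinal lt_dk); first by rewrite inE dQ inE.
  by rewrite /up iter_parent_child.
rewrite -cardsT mulnC; apply: leq_trans (subset_leq_card covered) _.
by rewrite (leq_trans (leq_imset_card _ _)) // cardsX cardsT card_ord.
Qed.

Lemma bkpvc_lower_bound : 0 < #|T| -> #|T| + k <= 2 * k * #|P|.
Proof.
move=> T_gt0.
have B_lt_P : #|B| < #|P|.
  apply: leq_trans (branching_lt_leaves T_gt0) (subset_leq_card _).
  by apply/subsetP => v; rewrite inE; apply: leaf_in_cover.
have Q_lt : #|P :|: B| < #|P| + #|P|.
  by apply: leq_ltn_trans (leq_card_setU P B) _; rewrite ltn_add2l.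
have := leq_mul (leqnn k) Q_lt; have := card_le_mul_cover_branching; nia.
Qed.

End RootedForest.

Lemma psi_b_lower_bound (T : finType) (e : rel T) k :
  is_rooted_forest e -> 0 < #|T| -> 0 < k -> #|T| + k <= 2 * k * psi_b e k.
Proof.
move=> forest T_gt0 k_gt0; rewrite /psi_b.
apply: (big_ind (fun x => #|T| + k <= 2 * k * x)) => [||P coverP].
- by nia.
- by nia.
- exact: (bkpvc_lower_bound forest k_gt0 coverP T_gt0).
Qed.

Section SubdividedHeap.
Variables (k p : nat).
Hypotheses (k_gt0 : 0 < k) (p_gt0 : 0 < p).
Local Notation m := p.*2.-1.
Local Notation n := (k * m).

Lemma heap_size : n = k.-1 * m + m.
Proof. by rewrite addnC -mulSn prednK. Qed.

(* Vertex i * m + j, for i < k and j < m, is the i-th vertex of the path that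
   replaces node j of the binary heap on m = 2p - 1 nodes; node j > 0 hangs
   below the last vertex of node (j - 1) / 2.  The heap leaves are the nodes
   j >= p - 1. *)
Definition heap_parent (v : nat) : nat :=
  if m <= v then v - m else k.-1 * m + v.-1 %/ 2.

Definition heap_arc : rel 'I_n := fun u v => (0 < v) && (heap_parent v == u).

(* The position of v when the vertices are listed path by path; every arc
   increases it. *)
Definition heap_rank (v : nat) : nat := v %% m * k + v %/ m.

Lemma heap_rank_lt u v : heap_arc u v -> heap_rank u < heap_rank v.
Proof.
have m_gt0 : 0 < m by lia.
rewrite /heap_arc /heap_parent => /andP [v_gt0].
case: (leqP m v) => [m_le_v | v_lt_m] /eqP <-.
  rewrite -[in X in _ < X](subnK m_le_v) /heap_rank modnDr divnDr ?dvdnn //.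
  by rewrite divnn m_gt0 addn1 addnS ltnSn.
have j_lt_v : v.-1 %/ 2 < v by lia.
have j_lt_m : v.-1 %/ 2 < m by lia.
move: (v.-1 %/ 2) j_lt_v j_lt_m => j j_lt_v j_lt_m.
rewrite /heap_rank modnMDl divnMDl // !modn_small // !divn_small // !addn0.
have := leq_mul j_lt_v (leqnn k); rewrite mulSn; lia.
Qed.

Lemma heap_indeg_le1 v : indeg heap_arc v <= 1.
Proof.
apply/card_le1_eqP => u w; rewrite !inE => /andP [_ /eqP u_def] /andP [_ /eqP w_def].
by apply: ord_inj; rewrite -u_def -w_def.
Qed.

Lemma heap_forest : is_rooted_forest heap_arc.
Proof. exact: (rooted_forest_of_rank heap_indeg_le1 heap_rank_lt). Qed.

Lemma heap_arc_above (u v : 'I_n) : u < k.-1 * m -> heap_arc u v = (v == u + m :> nat).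
Proof. by rewrite /heap_arc /heap_parent; case: (leqP m v); lia. Qed.

Lemma heap_arc_bottom (u v : 'I_n) : k.-1 * m <= u ->
  heap_arc u v = (0 < v < m) && (v.-1 %/ 2 == u - k.-1 * m).
Proof.
have := heap_size; have := ltn_ord v.
by rewrite /heap_arc /heap_parent; case: (leqP m v); lia.
Qed.

Lemma heap_branching (u : 'I_n) :
  k.-1 * m <= u < k.-1 * m + p.-1 -> is_branching heap_arc u.
Proof.
move=> /andP [u_bottom u_lt]; have m_le_n : m <= n by rewrite heap_size leq_addl.
have lt1 : (u - k.-1 * m).*2.+1 < n by lia.
have lt2 : (u - k.-1 * m).*2.+2 < n by lia.
rewrite /is_branching /outdeg.
apply: leq_trans (_ : #|[set Ordinal lt1; Ordinal lt2]| <= _).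
  by rewrite cards2 -val_eqE /=; lia.
apply/subset_leq_card/subsetP => v; rewrite !inE => /orP [] /eqP ->.
  by rewrite heap_arc_bottom //=; lia.
by rewrite heap_arc_bottom //=; lia.
Qed.

Lemma heap_not_leaf (u : 'I_n) : u < k.-1 * m + p.-1 -> ~~ is_leaf heap_arc u.
Proof.
move=> u_lt; case: (ltnP u (k.-1 * m)) => [u_above | u_bottom].
  have lt_n : u + m < n by have := heap_size; have := ltn_ord u; lia.
  rewrite /is_leaf /outdeg -lt0n; apply/card_gt0P.
  by exists (Ordinal lt_n); rewrite inE heap_arc_above.
have : is_branching heap_arc u by apply: heap_branching; rewrite u_bottom.
by rewrite /is_branching /is_leaf; case: outdeg.
Qed.

Lemma heap_path_above (x : 'I_n) s : path heap_arc x s ->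
  all (fun v : 'I_n => v < k.-1 * m) (x :: s) -> val (last x s) = x + size s * m.
Proof.
elim: s x => [|y s IH] x /=; first by rewrite mul0n addn0.
move=> /andP [xy ys] /andP [x_above ys_above].
move: xy; rewrite IH // heap_arc_above // => /eqP ->; rewrite mulSn; lia.
Qed.

Definition heap_cover : {set 'I_n} := [set v : 'I_n | k.-1 * m + p.-1 <= v].

Lemma heap_bkpvc : is_bkpvc heap_arc k heap_cover.
Proof.
apply/andP; split.
  apply/forallP => v; apply/implyP; apply: contraLR; rewrite inE -ltnNge.
  exact: heap_not_leaf.
apply/forallP => -[s size_s]; apply/implyP; case: s size_s => [//|x s] size_s x_path.
case: (boolP (all (fun v : 'I_n => v < k.-1 * m) (x :: s))) => [above|].
  have size_k : k.-1 = size s by move: (eqP size_s) => /=; lia.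
  have := allP above _ (mem_last x s).
  by rewrite /= (heap_path_above x_path above) size_k ltnNge leq_addl.
move=> /allPn [y y_in]; rewrite -leqNgt => y_bottom.
apply/hasP; exists y => //; apply/orP; rewrite inE.
case: (leqP (k.-1 * m + p.-1) y) => [y_top | y_lt]; [right | left] => //.
by rewrite heap_branching // y_bottom.
Qed.

Lemma card_heap_cover : #|heap_cover| = p.
Proof. by rewrite card_ord_geq; have := heap_size; lia. Qed.

End SubdividedHeap.

Theorem theorem1 :
  (forall (T : finType) (e : rel T) (k : nat),
      is_rooted_forest e -> (1 <= #|T|)%N -> (2 <= k)%N ->
      ((#|T| + k)%:R / (2 * k)%:R <= (psi_b e k)%:R :> rat)%R)
  /\
  (forall n k : nat, (1 <= n)%N -> (2 <= k)%N -> (2 * k %| n + k)%N ->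
      exists e : rel 'I_n,
        is_rooted_forest e /\ psi_b e k = ((n + k) %/ (2 * k))%N).
Proof.
split=> [T e k forest T_gt0 k_ge2 | n k n_gt0 k_ge2 /dvdnP [p def_p]].
  have k_gt0 : 0 < k by lia.
  rewrite ler_pdivrMr ?ltr0n ?muln_gt0 ?k_gt0 // -natrM ler_nat mulnC.
  exact: psi_b_lower_bound.
have k_gt0 : 0 < k by lia.
have p_gt0 : 0 < p by nia.
rewrite def_p mulnK ?muln_gt0 //.
have def_n : n = k * p.*2.-1 by nia.
subst n.
exists (@heap_arc k p); split; first exact: heap_forest.
apply/eqP; rewrite eqn_leq; apply/andP; split.
  by have := psi_b_le_card (heap_bkpvc k_gt0 p_gt0); rewrite card_heap_cover.
have card_gt0 : 0 < #|'I_(k * p.*2.-1)| by rewrite card_ord.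
have := psi_b_lower_bound (heap_forest k_gt0 p_gt0) card_gt0 k_gt0.
by rewrite card_ord; nia.
Qed.
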